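(* Let $c\ge 2$ be an integer with $\omega\ge 1$ distinct prime factors. Then for every real $x>0$, $$\frac{\varphi(c)}{x}-2^{\omega-1}<E_c(x)<\frac{\varphi(c)}{x}+2^{\omega-1}.$$
   Context: $\varphi$ is Euler's totient function. For a positive integer $c$ with distinct prime factors $q_1,\dots,q_\omega$ and real $x\ne 0$, $$E_c(x)=\sum_{S\subseteq\{1,\dots,\omega\}}(-1)^{|S|}\left\lfloor \frac{c}{x\prod_{i\in S}q_i}\right\rfloor.$$ *)

From mathcomp Require Import all_boot all_order all_algebra.
From mathcomp Require Import reals.
Set Implicit Arguments. Unset Strict Implicit. Unset Printing Implicit Defensive.
Import Order.TTheory GRing.Theory Num.Theory.
Local Open Scope ring_scope.

Definition omega (c : nat) : nat := size (primes c).

Definition qprime (c : nat) (i : 'I_(omega c)) : nat := nth 0%N (primes c) i.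

Definition Ec (R : realType) (c : nat) (x : R) : R :=
  \sum_(S : {set 'I_(omega c)})
     (-1) ^+ #|S| * (Num.floor (c%:R / (x * \prod_(i in S) (qprime i)%:R)))%:~R.

From mathcomp Require Import all_boot all_order all_algebra.
From mathcomp Require Import reals.
From mathcomp Require Import lra ring.
Import Order.TTheory GRing.Theory Num.Theory.
Local Open Scope ring_scope.

(* Expanding c * prod_i (1 - 1/q_i) = phi(c) shows that the same alternating sum without
   floors equals phi(c)/x exactly, so phi(c)/x - E_c(x) is the alternating sum of the
   2^omega fractional parts {c / (x q_S)}, each in [0, 1). Pairing S with S + {q_1}
   rewrites it as 2^(omega-1) differences of two fractional parts, each in (-1, 1). *)

Lemma prod1D_sum_set (R : comPzSemiRingType) (T : finType) (a : T -> R) :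
  \prod_i (1 + a i) = \sum_(S : {set T}) \prod_(i in S) a i.
Proof.
rewrite (eq_bigr (fun i => a i + 1)) => [|i _]; last by rewrite addrC.
rewrite bigA_distr; apply: eq_bigr => S _.
by rewrite [RHS]big_mkcond.
Qed.

Lemma natr_totient {F : numFieldType} (n : nat) : (0 < n)%N ->
  (totient n)%:R = n%:R * \prod_(p <- primes n) (1 - (p%:R : F)^-1).
Proof.
move=> n_gt0; rewrite {2}(prod_prime_decomp n_gt0) prime_decompE big_map /=.
rewrite totientE // !natr_prod -big_split /= big_seq [RHS]big_seq.
apply: eq_bigr => p p_n; have e_gt0 : (0 < logn p n)%N by rewrite logn_gt0.
have p_gt0 : (0 < p)%N by move: p_n; rewrite mem_primes => /andP[/prime_gt0].
have p_neq0 : (p%:R : F) != 0 by rewrite pnatr_eq0 -lt0n.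
rewrite -(prednK e_gt0) expnS !natrM !natrX -subn1 natrB //.
by field.
Qed.

Lemma sum_sign_div_prod_qprime {F : numFieldType} (c : nat) (x : F) : (0 < c)%N ->
  \sum_(S : {set 'I_(omega c)}) (-1) ^+ #|S| * (c%:R / (x * \prod_(i in S) (qprime i)%:R))
  = (totient c)%:R / x.
Proof.
move=> c_gt0; rewrite natr_totient // (big_nth 0%N) big_mkord.
rewrite (eq_bigr (fun i => 1 + - ((qprime i)%:R)^-1)) // prod1D_sum_set.
rewrite mulr_sumr mulr_suml; apply: eq_bigr => S _.
rewrite prodrN prodfV invfM; ring.
Qed.

Lemma sum_sign_setU1 {R : pzRingType} {T : finType} (a : T) (g : {set T} -> R) :
  \sum_(S : {set T}) (-1) ^+ #|S| * g S =
  \sum_(S : {set T} | a \notin S) (-1) ^+ #|S| * (g S - g (a |: S)).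
Proof.
rewrite (bigID (fun S : {set T} => a \notin S)) /= addrC.
rewrite (reindex_onto (fun S => a |: S) (fun S => S :\ a)) /=; last first.
  by move=> S /negPn aS; rewrite setD1K.
rewrite (eq_bigl (fun S : {set T} => a \notin S)) => [|S]; last first.
  rewrite setU11 /=; case: (boolP (a \in S)) => aS; last by rewrite setU1K ?eqxx.
  by apply/negbTE/eqP => eqS; move: aS; rewrite -eqS setD11.
rewrite addrC -big_split /=; apply: eq_bigr => S aS.
by rewrite cardsU1 aS exprS mulN1r mulNr mulrBr.
Qed.

Lemma card_sets_notin {T : finType} (a : T) :
  #|[set S : {set T} | a \notin S]| = (2 ^ #|T|.-1)%N.
Proof.
rewrite -(cardsC1 a) -card_powerset; apply: eq_card => S.
by rewrite !inE subsetC sub1set !inE.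
Qed.

Lemma norm_sum_sign_lt {R : realDomainType} {T : finType} (a : T) (g : {set T} -> R) :
  (forall S, 0 <= g S < 1) ->
  `|\sum_(S : {set T}) (-1) ^+ #|S| * g S| < (2 ^ #|T|.-1)%:R.
Proof.
move=> g01; rewrite (sum_sign_setU1 a) -(card_sets_notin a) -sum1_card natr_sum.
rewrite [X in _ < X](eq_bigl (fun S : {set T} => a \notin S)) => [|S]; last by rewrite inE.
apply: (le_lt_trans (ler_norm_sum _ _ _)); apply: ltr_sum => [|S _].
  by apply/hasP; exists set0; rewrite ?mem_index_enum ?inE.
rewrite normrM normrX normrN1 expr1n mul1r ltr_norml.
by have := g01 S; have := g01 (a |: S) => /andP[? ?] /andP[? ?]; apply/andP; split; lra.
Qed.

Theorem lemma1 (R : realType) (c : nat) (x : R) :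
  (2 <= c)%N -> (1 <= omega c)%N -> 0 < x ->
  (totient c)%:R / x - (2 ^ (omega c).-1)%:R < Ec c x /\
  Ec c x < (totient c)%:R / x + (2 ^ (omega c).-1)%:R.
Proof.
move=> c_ge2 omega_ge1 _.
pose y (S : {set 'I_(omega c)}) := c%:R / (x * \prod_(i in S) (qprime i)%:R).
pose frac S := y S - (Num.floor (y S))%:~R.
have frac01 S : 0 <= frac S < 1.
  by have /andP[] := floor_itv (y S); rewrite intrD /frac => ? ?; apply/andP; split; lra.
have Ec_frac : Ec c x = (totient c)%:R / x - \sum_(S : {set _}) (-1) ^+ #|S| * frac S.
  rewrite -(sum_sign_div_prod_qprime c x (ltnW c_ge2)) -sumrB.
  by apply: eq_bigr => S _; rewrite mulrBr opprB addrC subrK.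
have := norm_sum_sign_lt (Ordinal omega_ge1) frac frac01.
rewrite card_ord ltr_norml Ec_frac => /andP[lo hi].
by rewrite !ltrD2l ltrN2 ltrNl; split.
Qed.
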